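(* Let $\mathcal{S}=\{(k_1,\ldots,k_r): r\geq 1,\ k_1\geq 2,\ k_2,\ldots,k_r\geq 1 \text{ integers}\}$. Define a relation $\succ$ on $\mathcal{S}$ as follows: $(k_1,\ldots,k_r)\succ(m_1,\ldots,m_s)$ if either $(m_1,\ldots,m_s)$ is a proper initial segment of $(k_1,\ldots,k_r)$ (i.e. $s<r$ and $k_i=m_i$ for $1\leq i\leq s$), or there is $j\geq 0$ with $j<\min(r,s)$ such that $k_i=m_i$ for $1\leq i\leq j$ and $k_{j+1}<m_{j+1}$. Then for all $(k_1,\ldots,k_r),(m_1,\ldots,m_s)\in\mathcal{S}$, \[ (k_1,\ldots,k_r)\succ(m_1,\ldots,m_s)\iff \zeta^{\star}(k_1,\ldots,k_r)>\zeta^{\star}(m_1,\ldots,m_s). \]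
   Context: For integers $k_1\geq 2$ and $k_2,\ldots,k_r\geq 1$, $\zeta^{\star}(k_1,\ldots,k_r)=\sum_{n_1\geq n_2\geq\cdots\geq n_r\geq 1}\frac{1}{n_1^{k_1}\cdots n_r^{k_r}}$. (The paper defines $\succ$ as generated by the two rules ''$(k_1,\ldots,k_r,k_{r+1})\succ(k_1,\ldots,k_r)$'' and the lexicographic rule with reversed inequality; the description above is the resulting order.) *)

From HB Require Import structures.
From mathcomp Require Import all_boot all_order all_algebra.
From mathcomp Require Import all_classical all_reals all_analysis.
Set Implicit Arguments. Unset Strict Implicit. Unset Printing Implicit Defensive.
Import Order.TTheory GRing.Theory Num.Theory.
Import numFieldNormedType.Exports.
Local Open Scope ring_scope.

Definition admissible (k : seq nat) : bool :=
  [&& k != [::], (2 <= head 0%N k)%N & all (fun x => 0 < x)%N k].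

(* truncated zeta-star: zeta_trunc (k1,...,kr) N =
   sum_{N >= n1 >= n2 >= ... >= nr >= 1} 1/(n1^k1 ... nr^kr) *)
Fixpoint zeta_trunc (R : realType) (k : seq nat) (N : nat) : R :=
  match k with
  | [::] => 1
  | k1 :: ks => \sum_(1 <= n < N.+1) ((n%:R ^+ k1)^-1 * zeta_trunc R ks n)
  end.

Definition zeta_star (R : realType) (k : seq nat) : R :=
  limn (fun N => zeta_trunc R k N).

Definition succ_rel (k m : seq nat) : Prop :=
  ((size m < size k)%N /\ take (size m) k = m) \/
  (exists j : nat, (j < minn (size k) (size m))%N /\
     take j k = take j m /\ (nth 0%N k j < nth 0%N m j)%N).

From HB Require Import structures.
From mathcomp Require Import all_boot all_order all_algebra.
From mathcomp Require Import all_classical all_reals all_analysis.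
From mathcomp Require Import ring lra.
Import Order.TTheory GRing.Theory Num.Theory.
Import numFieldNormedType.Exports.
Local Open Scope ring_scope.

(* Write z_k(N) for the truncation of zeta-star at N.  Stripping the longest
   common prefix, k >- m becomes either (c, t) against the empty index or a
   first entry a < b.  In both cases the gap z_k(N) - z_m(N) is nondecreasing
   in N and positive at N = 2; for a < b this uses z_t(N) <= N when all
   entries of t are positive.  Prepending a common entry p keeps this
   property, because the increments of the new gap are N^-p times the old
   gap, which is nonnegative.  The truncations converge: they are
   nondecreasing, and since sum_(n >= m) n^-2 <= 2/m, one gets
   z_(2, c, t) <= 2 z_(2, t) and hence z_k <= 2^(size k).  So the gap has a
   positive limit.  The converse follows because >- is a strict total
   order. *)

Section ZetaTrunc.
Variable R : realType.
Local Notation z := (zeta_trunc R).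

Lemma invrX_le {x : R} {a b : nat} : 1 <= x -> (a <= b)%N ->
  (x ^+ b)^-1 <= (x ^+ a)^-1.
Proof.
move=> x_ge1 le_ab; have x_gt0 : 0 < x by lra.
by rewrite lef_pV2 ?posrE ?exprn_gt0 // ler_weXn2l.
Qed.

Lemma invrXS_mul (x : R) b : x != 0 -> (x ^+ b.+1)^-1 * x = (x ^+ b)^-1.
Proof. by move=> x_neq0; rewrite exprSr invfM -mulrA mulVf // mulr1. Qed.

Lemma inv_sqr_add_le {x : R} : 1 <= x -> (x ^+ 2)^-1 + 2 / (x + 1) <= 2 / x.
Proof.
move=> x_ge1; rewrite -subr_le0.
have x_neq0 : x != 0 by rewrite gt_eqF //; lra.
have x1_neq0 : x + 1 != 0 by rewrite gt_eqF //; lra.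
have -> : (x ^+ 2)^-1 + 2 / (x + 1) - 2 / x = (1 - x) / (x ^+ 2 * (x + 1)).
  by field; rewrite x_neq0 x1_neq0.
by rewrite mulr_le0_ge0 ?invr_ge0 ?mulr_ge0 ?exprn_ge0 //; lra.
Qed.

(* Summation by parts with sum_(n > N) n^-2 <= 2 / (N + 1); the second term on
   the left is the tail that makes the induction on N go through. *)
Lemma sum_inv_sqr_partial_le (f : nat -> R) N : (forall n, 0 <= f n) ->
  \sum_(1 <= n < N.+1) (n%:R ^+ 2)^-1 * \sum_(1 <= m < n.+1) f m
    + 2 * (\sum_(1 <= m < N.+1) f m) / N.+1%:R
  <= 2 * \sum_(1 <= m < N.+1) f m / m%:R.
Proof.
move=> f_ge0; elim: N => [|N IH].
  by rewrite !big_geq // !mulr0 mul0r addr0.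
rewrite !(big_nat_recr N.+1) //=.
have x_ge1 : 1 <= (N.+1%:R : R) by rewrite ler1n.
have -> : (N.+2%:R : R) = N.+1%:R + 1 by rewrite natr1.
set x := (N.+1%:R : R) in IH x_ge1 *.
set F := \sum_(1 <= m < N.+1) f m in IH *.
have F_ge0 : 0 <= F by rewrite sumr_ge0.
have := ler_wpM2l (addr_ge0 F_ge0 (f_ge0 N.+1)) (inv_sqr_add_le x_ge1).
move: IH; set S := \sum_(1 <= n < N.+1) _; set T := \sum_(1 <= m < N.+1) _.
clearbody x F S T; lra.
Qed.

Lemma zeta_trunc_nil N : z [::] N = 1.
Proof. by []. Qed.

Lemma zeta_truncS a t N :
  z (a :: t) N.+1 = z (a :: t) N + (N.+1%:R ^+ a)^-1 * z t N.+1.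
Proof. by rewrite /= big_nat_recr. Qed.

Lemma zeta_trunc0 a t : z (a :: t) 0 = 0.
Proof. by rewrite /= big_geq. Qed.

Lemma zeta_trunc1 t : z t 1 = 1.
Proof. by elim: t => //= a t IH; rewrite big_nat1 expr1n invr1 mul1r IH. Qed.

Lemma zeta_trunc2 a t : z (a :: t) 2 = 1 + (2 ^+ a)^-1 * z t 2.
Proof. by rewrite zeta_truncS zeta_trunc1. Qed.

Lemma zeta_trunc_ge0 t N : 0 <= z t N.
Proof.
elim: t N => //= a t IH N; apply: sumr_ge0 => n _.
by rewrite mulr_ge0 ?invr_ge0 ?exprn_ge0.
Qed.

Lemma zeta_trunc_consS_ge a t N : z (a :: t) N <= z (a :: t) N.+1.
Proof.
by rewrite zeta_truncS lerDl mulr_ge0 ?zeta_trunc_ge0 ?invr_ge0 ?exprn_ge0.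
Qed.

Lemma zeta_trunc_ge1 t N : (0 < N)%N -> 1 <= z t N.
Proof.
case: t => [//|a t]; elim: N => [//|[|N] IH _]; first by rewrite zeta_trunc1.
exact: le_trans (IH isT) (zeta_trunc_consS_ge _ _ _).
Qed.

Lemma zeta_trunc_le_nat t N : all (fun x => 0 < x)%N t -> (0 < N)%N ->
  z t N <= N%:R.
Proof.
elim: t N => [|c t IH] N; first by rewrite ler1n.
case/andP=> c_gt0 /IH {}IH _; elim: N => [|N IHN]; first by rewrite zeta_trunc0.
rewrite zeta_truncS -[leRHS]natr1 lerD //.
have x_ge1 : 1 <= (N.+1%:R : R) by rewrite ler1n.
apply: le_trans (_ : (N.+1%:R ^+ c)^-1 * N.+1%:R <= 1).
  by rewrite ler_wpM2l ?invr_ge0 ?exprn_ge0 ?IH.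
rewrite -(prednK c_gt0) invrXS_mul ?invf_le1 ?exprn_ege1 ?exprn_gt0 //; lra.
Qed.

Lemma zeta_trunc2_lt t : all (fun x => 0 < x)%N t -> z t 2 < 2.
Proof.
elim: t => [|c t IH]; first by rewrite /= ltr1n.
case/andP=> c_gt0 /IH {}IH; rewrite zeta_trunc2.
have two_c_ge2 : 2 <= 2 ^+ c :> R by rewrite -[leLHS]expr1 ler_eXn2l ?ltr1n.
have tail_lt : (2 ^+ c)^-1 * z t 2 < (2 ^+ c)^-1 * 2 :> R.
  by rewrite ltr_pM2l // invr_gt0 exprn_gt0.
have head_le1 : (2 ^+ c)^-1 * 2 <= 1 :> R.
  by rewrite mulrC ler_pdivrMr ?mul1r ?exprn_gt0.
lra.
Qed.

Lemma zeta_trunc_head_le a t N : (2 <= a)%N -> z (a :: t) N <= z (2 :: t) N.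
Proof.
move=> a_ge2; apply: ler_sum_nat => n /andP[n_ge1 _].
by rewrite ler_wpM2r ?zeta_trunc_ge0 // invrX_le // ler1n.
Qed.

Lemma zeta_trunc_2_le N : z [:: 2%N] N + 2 / N.+1%:R <= 2.
Proof.
elim: N => [|N IH]; first by rewrite zeta_trunc0 add0r divr1.
have x_ge1 : 1 <= (N.+1%:R : R) by rewrite ler1n.
have := inv_sqr_add_le x_ge1; rewrite natr1 zeta_truncS mulr1.
move: IH; set x := (N.+1%:R : R); set y := (N.+2%:R : R).
clearbody x y; lra.
Qed.

Lemma zeta_trunc_2cons_le c t N : (0 < c)%N ->
  z [:: 2, c & t] N <= 2 * z (2 :: t) N.
Proof.
move=> c_gt0.
have f_ge0 m : 0 <= (m%:R ^+ c)^-1 * z t m.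
  by rewrite mulr_ge0 ?invr_ge0 ?exprn_ge0 ?zeta_trunc_ge0.
have abel := sum_inv_sqr_partial_le (fun m => (m%:R ^+ c)^-1 * z t m) N f_ge0.
(* The first sum in [abel] is [z [:: 2, c & t] N] unfolded. *)
apply: le_trans (le_trans _ abel) _.
  apply: ler_wpDr; last exact: lexx.
  by rewrite !mulr_ge0 ?invr_ge0 // sumr_ge0.
rewrite ler_pM2l //; apply: ler_sum_nat => m /andP[m_ge1 _].
rewrite mulrAC -invfM -exprSr ler_wpM2r ?zeta_trunc_ge0 // invrX_le ?ler1n //.
Qed.

Lemma zeta_trunc_2_le_exp2 t N : all (fun x => 0 < x)%N t ->
  z (2 :: t) N <= 2 ^+ (size t).+1.
Proof.
elim: t N => [|c t IH] N.
  by move=> _; rewrite expr1 (le_trans _ (zeta_trunc_2_le N)) // lerDl.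
case/andP=> c_gt0 /IH {}IH.
by rewrite (le_trans (zeta_trunc_2cons_le _ _ _ c_gt0)) // exprS ler_pM2l.
Qed.

Lemma zeta_trunc_le_exp2 k N : admissible k -> z k N <= 2 ^+ size k.
Proof.
case: k => [//|a t] /and3P[_ a_ge2 /andP[_ t_pos]].
apply: le_trans (zeta_trunc_head_le _ _ _ a_ge2) _.
exact: zeta_trunc_2_le_exp2.
Qed.

Lemma is_cvgn_zeta_trunc k : admissible k -> cvgn (z k).
Proof.
move=> k_adm; apply: nondecreasing_is_cvgn.
  case: k k_adm => [//|a t] _.
  by apply/nondecreasing_seqP => N; apply: zeta_trunc_consS_ge.
by exists (2 ^+ size k) => _ [N _ <-]; apply: zeta_trunc_le_exp2.
Qed.

Definition trunc_dominates (x y : seq nat) : Prop :=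
  nondecreasing_seq (fun N => z x N - z y N) /\ z y 2 < z x 2.

Lemma trunc_dominates_le {x y} N : trunc_dominates x y -> (0 < N)%N ->
  z y N <= z x N.
Proof.
move=> [gap_nd _] N_gt0; have := gap_nd 1%N N N_gt0.
by rewrite !zeta_trunc1 subrr subr_ge0.
Qed.

Lemma trunc_dominates_cons a x y :
  trunc_dominates x y -> trunc_dominates (a :: x) (a :: y).
Proof.
move=> xy; have [_ lt2] := xy; split.
  apply/nondecreasing_seqP => N; rewrite !zeta_truncS opprD addrACA lerDl.
  rewrite -mulrBr mulr_ge0 ?invr_ge0 ?exprn_ge0 // subr_ge0.
  exact: trunc_dominates_le.
by rewrite !zeta_trunc2 ltrD2l ltr_pM2l // invr_gt0 exprn_gt0.
Qed.

Lemma trunc_dominates_cat p x y :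
  trunc_dominates x y -> trunc_dominates (p ++ x) (p ++ y).
Proof. by move=> xy; elim: p => //= a p; apply: trunc_dominates_cons. Qed.

Lemma trunc_dominates_nil a t : trunc_dominates (a :: t) [::].
Proof.
split.
  apply/nondecreasing_seqP => N.
  by rewrite !zeta_trunc_nil lerD2r zeta_trunc_consS_ge.
rewrite zeta_trunc_nil zeta_trunc2 ltrDl mulr_gt0 ?invr_gt0 ?exprn_gt0 //.
exact: lt_le_trans ltr01 (zeta_trunc_ge1 t 2 isT).
Qed.

Lemma trunc_dominates_lt_head a b x y :
  (a < b)%N -> all (fun x => 0 < x)%N y ->
  trunc_dominates (a :: x) (b :: y).
Proof.
case: b => [//|b]; rewrite ltnS => le_ab y_pos.
have x_head_ge n : (0 < n)%N -> (n%:R ^+ b)^-1 <= (n%:R ^+ a)^-1 * z x n.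
  move=> n_gt0; have n_ge1 : 1 <= n%:R :> R by rewrite ler1n.
  apply: le_trans (invrX_le n_ge1 le_ab) _.
  by rewrite ler_peMr ?invr_ge0 ?exprn_ge0 ?zeta_trunc_ge1.
have y_head_le n : (0 < n)%N -> (n%:R ^+ b.+1)^-1 * z y n <= (n%:R ^+ b)^-1.
  move=> n_gt0; rewrite -(invrXS_mul n%:R b) ?pnatr_eq0 -?lt0n //.
  by rewrite ler_wpM2l ?invr_ge0 ?exprn_ge0 ?zeta_trunc_le_nat.
split.
  apply/nondecreasing_seqP => N; rewrite !zeta_truncS opprD addrACA lerDl.
  by rewrite subr_ge0 (le_trans (y_head_le _ _)) ?x_head_ge.
rewrite !zeta_trunc2 ltrD2l (lt_le_trans _ (x_head_ge 2%N isT)) //.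
rewrite -(invrXS_mul 2 b) ?pnatr_eq0 // ltr_pM2l ?invr_gt0 ?exprn_gt0 //.
exact: zeta_trunc2_lt.
Qed.

Lemma zeta_star_lt_of_dominates x y : cvgn (z x) -> cvgn (z y) ->
  trunc_dominates x y -> zeta_star R y < zeta_star R x.
Proof.
move=> x_cvg y_cvg [gap_nd gap2].
rewrite -subr_gt0 -limB //.
apply: lt_le_trans _ (nondecreasing_cvgn_le gap_nd _ 2).
  by rewrite subr_gt0.
exact: is_cvgB.
Qed.

End ZetaTrunc.

Lemma succ_rel_cons a k m : succ_rel k m -> succ_rel (a :: k) (a :: m).
Proof.
case=> [[lt_size take_eq] | [j [lt_j [take_eq lt_nth]]]]; [left | right].
  by rewrite /= ltnS take_eq.
by exists j.+1; rewrite /= minnSS ltnS take_eq.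
Qed.

Lemma succ_rel_trichotomy k m : [\/ k = m, succ_rel k m | succ_rel m k].
Proof.
elim: k m => [|a k IH] [|b m]; first by constructor.
- by constructor 3; left.
- by constructor 2; left.
case: (ltngtP a b) => [lt_ab | lt_ba | <-].
- by constructor 2; right; exists 0%N; rewrite /= minnSS.
- by constructor 3; right; exists 0%N; rewrite /= minnSS.
case: (IH m) => [-> | km | mk]; first by constructor.
  by constructor 2; apply: succ_rel_cons.
by constructor 3; apply: succ_rel_cons.
Qed.

Lemma succ_rel_split k m : succ_rel k m ->
  (exists c t, k = m ++ c :: t) \/
  (exists p a b tk tm, [/\ (a < b)%N, k = p ++ a :: tk & m = p ++ b :: tm]).
Proof.
case=> [[lt_size take_eq] | [j [lt_j [take_eq lt_nth]]]].
  left; exists (nth 0%N k (size m)), (drop (size m).+1 k).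
  by rewrite -(drop_nth 0%N lt_size) -{1}take_eq cat_take_drop.
right; move: lt_j; rewrite leq_min => /andP[lt_jk lt_jm].
exists (take j m), (nth 0%N k j), (nth 0%N m j), (drop j.+1 k), (drop j.+1 m).
split => //; last by rewrite -(drop_nth 0%N lt_jm) cat_take_drop.
by rewrite -take_eq -(drop_nth 0%N lt_jk) cat_take_drop.
Qed.

Lemma trunc_dominates_of_succ_rel (R : realType) {k m} :
  succ_rel k m -> all (fun x => 0 < x)%N m -> trunc_dominates R k m.
Proof.
case/succ_rel_split=> [[c [t ->]] _ | [p [a [b [tk [tm [lt_ab -> ->]]]]]]].
  rewrite -[m in trunc_dominates _ _ m]cats0.
  exact/trunc_dominates_cat/trunc_dominates_nil.
rewrite all_cat => /andP[_ /andP[_ tm_pos]].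
exact/trunc_dominates_cat/trunc_dominates_lt_head.
Qed.

Lemma zeta_star_lt_of_succ_rel (R : realType) {k m} :
  admissible k -> admissible m -> succ_rel k m -> zeta_star R m < zeta_star R k.
Proof.
move=> k_adm m_adm km.
apply: zeta_star_lt_of_dominates; [exact: is_cvgn_zeta_trunc.. |].
by apply: (trunc_dominates_of_succ_rel _ km); case/and3P: m_adm.
Qed.

Theorem theorem1p2 (R : realType) (k m : seq nat) :
  admissible k -> admissible m ->
  (succ_rel k m <-> zeta_star R m < zeta_star R k).
Proof.
move=> k_adm m_adm; split; first exact: zeta_star_lt_of_succ_rel.
move=> lt_mk; case: (succ_rel_trichotomy k m) => [eq_km | // | mk].
  by rewrite eq_km ltxx in lt_mk.
by have := zeta_star_lt_of_succ_rel R m_adm k_adm mk; rewrite ltNge (ltW lt_mk).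
Qed.
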